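(* Let $(X,d)$ be a quasi-pseudometric space and $\varphi:X\to\mathbb{R}\cup\{\infty\}$ a proper bounded below function. For $x\in\operatorname{dom}\varphi$ let $S(x)=\{y\in X:\varphi(y)+d(y,x)\le\varphi(x)\}$ and $J(x)=\inf\varphi(S(x))$. Let $x_0\in\operatorname{dom}\varphi$. Then one of the following two situations occurs. 1. There exist $m\in\mathbb{N}_0$ and points $x_1,\dots,x_m$ such that for all $0\le k\le m-1$: $\varphi(x_k)>J(x_k)$, $x_{k+1}\in S(x_k)$ and $\varphi(x_{k+1})<(\varphi(x_k)+J(x_k))/2$; and $\varphi(x_m)=J(x_m)$. In this case, putting $z=x_m$: (i) $S(x_{k+1})\subseteq S(x_k)$ and $\varphi(x_{k+1})<\varphi(x_k)$ for all $0\le k\le m-1$; (ii) $z\in S(x_k)$ and $S(z)\subseteq S(x_k)$ for $0\le k\le m$; (iii) $\varphi(y)=\varphi(z)=J(z)$ for all $y\in S(z)$; (iv) $S(y)\subseteq\overline{\{y\}}$ for all $y\in S(z)$. 2. There exists a sequence $(x_n)_{n\in\mathbb{N}_0}$ (starting at $x_0$) such that for all $n\in\mathbb{N}_0$: $\varphi(x_n)>J(x_n)$, $x_{n+1}\in S(x_n)$ and $\varphi(x_{n+1})<(\varphi(x_n)+J(x_n))/2$. In this case: (i) $S(x_{n+1})\subseteq S(x_n)$ and $\varphi(x_{n+1})<\varphi(x_n)$ for all $n$; (ii) the limits $\alpha:=\lim_n\varphi(x_n)=\lim_n J(x_n)$ exist and are real; (iii) $x_{n+k}\in S(x_n)$ for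 all $n,k\in\mathbb{N}_0$; (iv) $(x_n)$ is right $K$-Cauchy. If moreover $X$ is sequentially right $K$-complete and $\varphi$ is nearly lower semicontinuous, then $(x_n)$ converges to a point $z\in X$ such that (i) $z\in S(x_n)$ and $S(z)\subseteq S(x_n)$ for all $n\in\mathbb{N}_0$; (ii) $\varphi(y)=\varphi(z)=J(z)=\alpha$ for all $y\in S(z)$; (iii) $S(y)\subseteq\overline{\{y\}}$ for all $y\in S(z)$.
   Context: A quasi-pseudometric on $X$ is $d:X\times X\to[0,\infty)$ with $d(x,x)=0$ and $d(x,z)\le d(x,y)+d(y,z)$ (no symmetry). Topology $\tau_d$: neighbourhood base at $x$ given by $\{y:d(x,y)<r\}$, $r>0$; so $x_n\to x$ iff $d(x,x_n)\to0$, and $\overline{\{y\}}=\{x: d(x,y)=0\}$. A sequence $(x_n)$ is right $K$-Cauchy if for every $\varepsilon>0$ there is $n_\varepsilon$ with $d(x_{n+k},x_n)<\varepsilon$ for all $n\ge n_\varepsilon$, $k\in\mathbb{N}$; $X$ is sequentially right $K$-complete if every right $K$-Cauchy sequence converges (in $\tau_d$). $\varphi$ is proper if $\operatorname{dom}\varphi=\{x:\varphi(x)<\infty\}\ne\emptyset$. $\varphi$ is nearly lower semicontinuous if $\varphi(x)\le\liminf_n\varphi(x_n)$ for every sequence with pairwise distinct terms converging to $x$. $\mathbb{N}_0=\{0,1,2,\dots\}$. *)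

From HB Require Import structures.
From mathcomp Require Import all_boot all_order all_algebra.
From mathcomp Require Import all_classical all_reals all_analysis.
Set Implicit Arguments. Unset Strict Implicit. Unset Printing Implicit Defensive.
Import Order.TTheory GRing.Theory Num.Theory numFieldNormedType.Exports.
Local Open Scope classical_set_scope.
Local Open Scope ring_scope.

Section QPM.
Context {R : realType} {X : Type}.

Definition quasi_pseudometric (d : X -> X -> R) : Prop :=
  (forall x y, 0 <= d x y) /\ (forall x, d x x = 0) /\
  (forall x y z, d x z <= d x y + d y z).

(* x_n --> x in tau_d  iff  d(x, x_n) --> 0 *)
Definition qconverges (d : X -> X -> R) (u : nat -> X) (x : X) : Prop :=
  (fun n => d x (u n)) @ \oo --> 0.

(* closure in tau_d (neighbourhood base {y : d x y < r}) *)
Definition qclosure (d : X -> X -> R) (A : set X) : set X :=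
  [set x | forall r : R, 0 < r -> exists2 a, A a & d x a < r].

Definition right_K_Cauchy (d : X -> X -> R) (u : nat -> X) : Prop :=
  forall eps : R, 0 < eps -> exists N : nat,
    forall n k : nat, (N <= n)%N -> d (u (n + k)%N) (u n) < eps.

Definition seq_right_K_complete (d : X -> X -> R) : Prop :=
  forall u : nat -> X, right_K_Cauchy d u -> exists x, qconverges d u x.

(* phi : X -> R u {+oo} : extended-real valued, never -oo *)
Definition phi_dom (phi : X -> \bar R) : set X := [set x | phi x \is a fin_num].

Definition phi_proper (phi : X -> \bar R) : Prop := phi_dom phi !=set0.

Definition bounded_below (phi : X -> \bar R) : Prop :=
  exists c : R, forall x, (c%:E <= phi x)%E.

Definition nearly_lsc (d : X -> X -> R) (phi : X -> \bar R) : Prop :=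
  forall (u : nat -> X) (x : X), (forall i j, i <> j -> u i <> u j) ->
    qconverges d u x -> (phi x <= limn_einf (fun n => phi (u n)))%E.

Definition Sset (d : X -> X -> R) (phi : X -> \bar R) (x : X) : set X :=
  [set y | (phi y + (d y x)%:E <= phi x)%E].

Definition Jval (d : X -> X -> R) (phi : X -> \bar R) (x : X) : \bar R :=
  ereal_inf (phi @` Sset d phi x).

Definition step_cond (d : X -> X -> R) (phi : X -> \bar R) (a b : X) : Prop :=
  (Jval d phi a < phi a)%E /\ Sset d phi a b /\
  (phi b < (phi a + Jval d phi a) * (2^-1)%:E)%E.

End QPM.

From HB Require Import structures.
From mathcomp Require Import all_boot all_order all_algebra.
From mathcomp Require Import all_classical all_reals all_analysis.
From mathcomp Require Import lra.
Import Order.TTheory GRing.Theory Num.Theory numFieldNormedType.Exports.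
Local Open Scope classical_set_scope.
Local Open Scope ring_scope.
Set Implicit Arguments. Unset Strict Implicit.

(* By the triangle inequality the relation y in S(x) is transitive, so along a step
   x_k -> x_(k+1) the sets S shrink and phi strictly decreases.  A step is chosen (by
   choice) whenever phi(x) > J(x), and iterated from x0: either some first x_m has
   phi(x_m) = J(x_m), or the sequence is infinite.
   If phi(z) = J(z), every y in S(z) has J(z) <= phi(y) <= phi(z) - d(y,z), so phi is
   constant on S(z); then every w in S(y) has d(w,y) = 0, i.e. lies in the closure of y.
   For an infinite sequence, J(x_n) <= phi(x_(n+1)) < (phi(x_n) + J(x_n))/2 squeezes
   phi(x_n) and J(x_n) to a common limit alpha, and
   d(x_(n+k),x_n) <= phi(x_n) - phi(x_(n+k)) makes the sequence right K-Cauchy.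
   Its terms are pairwise distinct, so near lower semicontinuity gives phi(z) <= alpha
   at the limit z; hence z is in every S(x_n), and each y in S(z) satisfies
   alpha <- J(x_n) <= phi(y) <= phi(z) <= alpha. *)

Lemma nonincreasing_squeeze_cvg (R : realType) (u v : R^nat) (c : R) :
  (forall n, c <= u n) -> (forall n, u n.+1 <= u n) ->
  (forall n, u n.+1 + (u n.+1 - u n) <= v n <= u n.+1) ->
  cvgn u /\ v @ \oo --> limn u.
Proof.
move=> u_ge u_noninc v_bnd.
have u_cvg : cvgn u.
  apply: nonincreasing_is_cvgn; first exact/nonincreasing_seqP.
  by exists c => _ [n _ <-].
split=> //.
have uS_cvg : (fun n => u n.+1) @ \oo --> limn u by rewrite (cvg_shiftS u).
have : (fun n => u n.+1 + (u n.+1 - u n)) @ \oo --> limn u + (limn u - limn u).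
  exact: cvgD uS_cvg (cvgB uS_cvg u_cvg).
rewrite subrr addr0 => low_cvg.
apply: (squeeze_cvgr _ low_cvg uS_cvg); exact: nearW.
Qed.

Lemma right_K_Cauchy_dominated (R : realType) (X : Type) (d : X -> X -> R)
    (x : nat -> X) (u : R^nat) :
  {homo u : n m / (n <= m)%N >-> m <= n} -> cvgn u ->
  (forall n k, d (x (n + k)%N) (x n) <= u n - u (n + k)%N) ->
  right_K_Cauchy d x.
Proof.
move=> u_noninc u_cvg d_le e e_gt0.
have [N _ u_near] : \forall n \near \oo, u n < limn u + e.
  by apply: (cvgr_lt _ u_cvg); rewrite ltrDl.
exists N => n k Nn; have := u_near n Nn.
have := nonincreasing_cvgn_ge u_noninc u_cvg (n + k)%N.
have := d_le n k; lra.
Qed.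

Section Descent.
Variables (R : realType) (X : Type) (d : X -> X -> R) (phi : X -> \bar R).
Hypothesis d_qpm : quasi_pseudometric d.
Hypothesis phi_neqNy : forall x, phi x != -oo%E.

Local Notation SS := (Sset d phi).
Local Notation J := (Jval d phi).

Let d_ge0 x y : 0 <= d x y. Proof. by case: d_qpm. Qed.
Let d_triangle x y z : d x z <= d x y + d y z. Proof. by case: d_qpm => _ []. Qed.

Lemma SsetP x y : phi x \is a fin_num ->
  SS x y <-> phi y \is a fin_num /\ fine (phi y) + d y x <= fine (phi x).
Proof.
move=> phix_fin; rewrite /Sset /= -(fineK phix_fin); split.
  by case: (phi y) (phi_neqNy y) => [r| |].
by case=> phiy_fin; rewrite -(fineK phiy_fin) -EFinD lee_fin fineK.
Qed.

Lemma Sset_refl x : SS x x.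
Proof. by case: d_qpm => _ [d0 _]; rewrite /Sset /= d0 adde0. Qed.

Lemma Sset_trans x y : phi x \is a fin_num -> SS x y -> SS y `<=` SS x.
Proof.
move=> phix_fin /(SsetP _ phix_fin)[phiy_fin Sxy] w /(SsetP _ phiy_fin)[phiw_fin Syw].
by apply/(SsetP _ phix_fin); split=> //; have := d_triangle w y x; lra.
Qed.

Lemma Jval_le x y : SS x y -> (J x <= phi y)%E.
Proof. by move=> Sxy; apply: ereal_inf_lbound; exists y. Qed.

Lemma Jval_le_phi x : (J x <= phi x)%E.
Proof. exact/Jval_le/Sset_refl. Qed.

Lemma step_cond_Sset x y : step_cond d phi x y -> SS x y.
Proof. by case=> _ []. Qed.

Section Chain.
Variables (x : nat -> X) (m : nat).
Hypothesis x0_fin : phi (x 0%N) \is a fin_num.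
Hypothesis x_steps : forall k, (k < m)%N -> step_cond d phi (x k) (x k.+1).

Lemma chain_Sset_x0 k : (k <= m)%N -> SS (x 0%N) (x k).
Proof.
elim: k => [|k IHk] km; first exact: Sset_refl.
exact: Sset_trans x0_fin (IHk (ltnW km)) _ (step_cond_Sset (x_steps km)).
Qed.

Lemma chain_fin k : (k <= m)%N -> phi (x k) \is a fin_num.
Proof. by move=> km; case/(SsetP _ x0_fin): (chain_Sset_x0 km). Qed.

Lemma chain_Sset k n : (k <= n <= m)%N -> SS (x k) (x n).
Proof.
elim: n => [|n IHn] /andP[kn nm].
  by move: kn; rewrite leqn0 => /eqP ->; exact: Sset_refl.
rewrite leq_eqVlt in kn; case/orP: kn => [/eqP -> | kn]; first exact: Sset_refl.
have Skn : SS (x k) (x n) by apply: IHn; rewrite [(k <= n)%N]kn ltnW.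
have xk_fin := chain_fin (leq_trans (ltnW kn) nm).
exact: Sset_trans xk_fin Skn _ (step_cond_Sset (x_steps nm)).
Qed.

End Chain.

Lemma next_steps (next : X -> X) (x : nat -> X) m :
  (forall x, phi x \is a fin_num -> (J x < phi x)%E -> step_cond d phi x (next x)) ->
  (forall n, x n.+1 = next (x n)) -> phi (x 0%N) \is a fin_num ->
  (forall k, (k < m)%N -> phi (x k) != J (x k)) ->
  forall k, (k < m)%N -> step_cond d phi (x k) (x k.+1).
Proof.
move=> next_step x_next x0_fin; elim: m => [//|m IHm] neq.
have steps_m := IHm (fun k km => neq k (ltnW km)).
move=> k; rewrite ltnS leq_eqVlt => /orP[/eqP->|]; last exact: steps_m.
rewrite x_next; apply: next_step; first exact: (chain_fin x0_fin steps_m).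
by rewrite lt_neqAle eq_sym neq // Jval_le_phi.
Qed.

Lemma Sset_phi_eq z : phi z \is a fin_num -> phi z = J z ->
  forall y, SS z y -> phi y = phi z.
Proof.
move=> phiz_fin phiz_J y Szy; have [phiy_fin le_yz] := (SsetP _ phiz_fin).1 Szy.
apply/le_anti/andP; split; last by rewrite {1}phiz_J; exact: Jval_le.
by rewrite -(fineK phiy_fin) -(fineK phiz_fin) lee_fin; have := d_ge0 y z; lra.
Qed.

Section ConstantOnSset.
Variable z : X.
Hypotheses (phiz_fin : phi z \is a fin_num)
  (phi_const : forall y, SS z y -> phi y = phi z).

Lemma Jval_const : J z = phi z.
Proof.
apply/le_anti; rewrite Jval_le_phi /=.
by apply: le_ereal_inf_tmp => _ [y Szy <-]; rewrite phi_const.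
Qed.

Lemma Sset_const_closure y : SS z y -> SS y `<=` qclosure d [set y].
Proof.
move=> Szy w Syw r r_gt0; exists y => //.
have [phiy_fin _] := (SsetP _ phiz_fin).1 Szy.
have [_ le_wy] := (SsetP _ phiy_fin).1 Syw.
move: le_wy; rewrite (phi_const (Sset_trans phiz_fin Szy Syw)) -(phi_const Szy).
by have := d_ge0 w y; lra.
Qed.

End ConstantOnSset.

Section BoundedBelow.
Variable c : R.
Hypothesis phi_ge : forall x, (c%:E <= phi x)%E.

Lemma Jval_fin x : phi x \is a fin_num -> J x \is a fin_num.
Proof.
move=> phix_fin; have := Jval_le_phi x.
have : (c%:E <= J x)%E by apply: le_ereal_inf_tmp => _ [y _ <-].
by rewrite -(fineK phix_fin); case: (J x).
Qed.

Lemma exists_step x : phi x \is a fin_num -> (J x < phi x)%E ->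
  exists y, step_cond d phi x y.
Proof.
move=> phix_fin Jx_lt; have Jx_fin := Jval_fin phix_fin.
have : (J x < (phi x + J x) * (2^-1)%:E)%E.
  move: Jx_lt; rewrite -(fineK phix_fin) -(fineK Jx_fin) -EFinD -EFinM !lte_fin.
  lra.
by case/ereal_inf_lt => _ [y Sxy <-] ?; exists y.
Qed.

Lemma exists_next : exists next : X -> X,
  forall x, phi x \is a fin_num -> (J x < phi x)%E -> step_cond d phi x (next x).
Proof.
pose P x y := phi x \is a fin_num -> (J x < phi x)%E -> step_cond d phi x y.
have [next next_step] : {next : X -> X & forall x, P x (next x)}.
  apply: choice => x.
  have [[phix_fin Jx_lt]|no_step] := pselect (phi x \is a fin_num /\ (J x < phi x)%E).
    by have [y xy] := exists_step phix_fin Jx_lt; exists y.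
  by exists x => phix_fin Jx_lt; case: no_step.
by exists next.
Qed.

Lemma step_cond_fine x y : phi x \is a fin_num -> step_cond d phi x y ->
  [/\ phi y \is a fin_num, fine (phi y) + d y x <= fine (phi x),
      fine (J x) <= fine (phi y) &
      fine (phi y) + (fine (phi y) - fine (phi x)) < fine (J x)].
Proof.
move=> phix_fin [_ [Sxy lt_mid]].
have [phiy_fin le_yx] := (SsetP _ phix_fin).1 Sxy.
have Jx_fin := Jval_fin phix_fin.
have := Jval_le Sxy; move: lt_mid.
rewrite -(fineK phix_fin) -(fineK phiy_fin) -(fineK Jx_fin) -EFinD -EFinM.
by rewrite lte_fin lee_fin => ? ?; split=> //; lra.
Qed.

Lemma step_cond_descent x y : phi x \is a fin_num -> step_cond d phi x y ->
  SS y `<=` SS x /\ (phi y < phi x)%E.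
Proof.
move=> phix_fin xy; split; first exact: Sset_trans phix_fin (step_cond_Sset xy).
have [phiy_fin _ ? ?] := step_cond_fine phix_fin xy.
by rewrite -(fineK phix_fin) -(fineK phiy_fin) lte_fin; lra.
Qed.

Lemma terminal_chain_properties (x : nat -> X) m :
  phi (x 0%N) \is a fin_num ->
  (forall k, (k < m)%N -> step_cond d phi (x k) (x k.+1)) ->
  phi (x m) = J (x m) ->
  (forall k, (k < m)%N -> SS (x k.+1) `<=` SS (x k) /\ (phi (x k.+1) < phi (x k))%E) /\
  (forall k, (k <= m)%N -> SS (x k) (x m) /\ SS (x m) `<=` SS (x k)) /\
  (forall y, SS (x m) y -> phi y = phi (x m) /\ phi (x m) = J (x m)) /\
  (forall y, SS (x m) y -> SS y `<=` qclosure d [set y]).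
Proof.
move=> x0_fin steps xm_J.
have fin k (km : (k <= m)%N) := chain_fin x0_fin steps km.
have xm_const := Sset_phi_eq (fin m (leqnn m)) xm_J.
split.
  by move=> k km; exact: step_cond_descent (fin k (ltnW km)) (steps k km).
split.
  move=> k km; have Skm : SS (x k) (x m).
    by apply: (chain_Sset x0_fin steps); rewrite km leqnn.
  by split=> //; exact: Sset_trans (fin k km) Skm.
split; first by move=> y Sy; split; [exact: xm_const|].
exact: Sset_const_closure (fin m (leqnn m)) xm_const.
Qed.

Section DescentSequence.
Variable x : nat -> X.
Hypotheses (x0_fin : phi (x 0%N) \is a fin_num)
  (x_steps : forall n, step_cond d phi (x n) (x n.+1)).

Let steps_upto m : forall k, (k < m)%N -> step_cond d phi (x k) (x k.+1) :=
  fun k _ => x_steps k.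
Let fin n : phi (x n) \is a fin_num := chain_fin x0_fin (@steps_upto n) (leqnn n).
Let u n := fine (phi (x n)).
Let v n := fine (J (x n)).

Lemma descent_Sset n k : SS (x n) (x (n + k)%N).
Proof. by apply: (chain_Sset x0_fin (@steps_upto (n + k))); rewrite leq_addr leqnn. Qed.

Let u_decr n : u n.+1 < u n.
Proof.
have [_ _ ? ?] := step_cond_fine (fin n) (x_steps n).
by rewrite /u; lra.
Qed.

Let u_noninc : {homo u : n m / (n <= m)%N >-> m <= n}.
Proof. by apply/nonincreasing_seqP => n; exact: ltW. Qed.

Let uv_cvg : cvgn u /\ v @ \oo --> limn u.
Proof.
apply: (@nonincreasing_squeeze_cvg _ _ _ c) => n.
- by have := phi_ge (x n); rewrite -(fineK (fin n)) lee_fin.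
- exact: ltW.
- have [_ _ ? ?] := step_cond_fine (fin n) (x_steps n).
  by rewrite /u /v; apply/andP; split; lra.
Qed.

Let u_cvg := uv_cvg.1.
Let v_cvg := uv_cvg.2.
Let alpha := limn u.

Lemma descent_phi_cvg : (fun n => phi (x n)) @ \oo --> alpha%:E.
Proof. by apply/fine_cvgP; split; [exact: nearW | exact: u_cvg]. Qed.

Lemma descent_Jval_cvg : (fun n => J (x n)) @ \oo --> alpha%:E.
Proof.
by apply/fine_cvgP; split; [apply: nearW => n; exact: Jval_fin | exact: v_cvg].
Qed.

Lemma descent_right_K_Cauchy : right_K_Cauchy d x.
Proof.
apply: (right_K_Cauchy_dominated u_noninc u_cvg) => n k.
by have [_] := (SsetP _ (fin n)).1 (descent_Sset n k); rewrite /u; lra.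
Qed.

Lemma descent_injective i j : i <> j -> x i <> x j.
Proof.
have u_lt k l : (k < l)%N -> u l < u k.
  by move=> kl; exact: le_lt_trans (u_noninc kl) (u_decr k).
move=> /eqP; rewrite neq_ltn => /orP[] /u_lt + xij; by rewrite /u xij ltxx.
Qed.

Section Limit.
Variable z : X.
Hypotheses (x_to_z : qconverges d x z) (phi_nlsc : nearly_lsc d phi).

Lemma limit_phi_le : phi z \is a fin_num /\ fine (phi z) <= alpha.
Proof.
have := phi_nlsc descent_injective x_to_z.
rewrite (cvg_limn_einf_sup descent_phi_cvg).1.
by case: (phi z) (phi_neqNy z) => [r| |] //=; rewrite lee_fin.
Qed.

Lemma limit_in_Sset n : SS (x n) z.
Proof.
have [phiz_fin phiz_le] := limit_phi_le.
apply/(SsetP _ (fin n)); split=> //.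
suff : d z (x n) <= u n - alpha by rewrite /u; lra.
have rhs_cvg : (fun k => d z (x k) + (u n - u k)) @ \oo --> 0 + (u n - alpha).
  by apply: cvgD => //; apply: cvgB => //; exact: cvg_cst.
rewrite add0r in rhs_cvg; rewrite -(cvg_lim _ rhs_cvg) //.
apply: limr_ge; first by apply/cvg_ex; exists (u n - alpha).
exists n => // k /= nk.
have Snk : SS (x n) (x k) by apply: (chain_Sset x0_fin (@steps_upto k)); rewrite nk leqnn.
have [_] := (SsetP _ (fin n)).1 Snk.
by have := d_triangle z (x k) (x n); rewrite /u; lra.
Qed.

Lemma limit_Sset_phi y : SS z y -> phi y = alpha%:E.
Proof.
move=> Szy; have [phiz_fin phiz_le] := limit_phi_le.
have [phiy_fin le_yz] := (SsetP _ phiz_fin).1 Szy.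
rewrite -(fineK phiy_fin); congr (_%:E); apply/le_anti/andP; split.
  by have := d_ge0 y z; lra.
rewrite /alpha -(cvg_lim _ v_cvg) //.
apply: limr_le; first by apply/cvg_ex; exists (limn u).
apply: nearW => n; have Sxy := Sset_trans (fin n) (limit_in_Sset n) Szy.
have := Jval_le Sxy; rewrite -(fineK phiy_fin) -(fineK (Jval_fin (fin n))).
by rewrite lee_fin.
Qed.

End Limit.

Lemma infinite_descent_properties :
  (forall n, SS (x n.+1) `<=` SS (x n) /\ (phi (x n.+1) < phi (x n))%E) /\
  (exists alpha : R,
     (fun n => phi (x n)) @ \oo --> alpha%:E /\
     (fun n => J (x n)) @ \oo --> alpha%:E /\
     (forall n k, SS (x n) (x (n + k)%N)) /\
     right_K_Cauchy d x /\
     (seq_right_K_complete d -> nearly_lsc d phi ->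
      exists z : X, qconverges d x z /\
        (forall n, SS (x n) z /\ SS z `<=` SS (x n)) /\
        (forall y, SS z y -> phi y = phi z /\ phi z = J z /\ J z = alpha%:E) /\
        (forall y, SS z y -> SS y `<=` qclosure d [set y]))).
Proof.
split; first by move=> n; exact: step_cond_descent (fin n) (x_steps n).
exists alpha; split; first exact: descent_phi_cvg.
split; first exact: descent_Jval_cvg.
split; first exact: descent_Sset.
split; first exact: descent_right_K_Cauchy.
move=> complete nlsc; have [z x_to_z] := complete x descent_right_K_Cauchy.
have [phiz_fin _] := limit_phi_le x_to_z nlsc.
have z_alpha := limit_Sset_phi x_to_z nlsc.
have z_const y (Szy : SS z y) : phi y = phi z by rewrite !z_alpha //; exact: Sset_refl.
have Jz := Jval_const z_const.
exists z; split=> //; split.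
  move=> n; have Sxz := limit_in_Sset x_to_z nlsc n.
  by split=> //; exact: Sset_trans (fin n) Sxz.
split; last exact: Sset_const_closure phiz_fin z_const.
move=> y Szy; rewrite Jz; split; first exact: z_const.
by split=> //; apply: z_alpha; exact: Sset_refl.
Qed.

End DescentSequence.

End BoundedBelow.
End Descent.

Theorem proposition2p14 (R : realType) (X : Type) (d : X -> X -> R)
  (phi : X -> \bar R) (x0 : X) :
  quasi_pseudometric d ->
  (forall x, phi x != -oo%E) ->
  phi_proper phi -> bounded_below phi ->
  phi_dom phi x0 ->
  let SS := Sset d phi in
  let J := Jval d phi in
  (* situation 1 *)
  (exists (m : nat) (x : nat -> X),
     x 0%N = x0 /\
     (forall k, (k < m)%N -> step_cond d phi (x k) (x k.+1)) /\
     phi (x m) = J (x m) /\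
     let z := x m in
     (forall k, (k < m)%N -> SS (x k.+1) `<=` SS (x k) /\ (phi (x k.+1) < phi (x k))%E) /\
     (forall k, (k <= m)%N -> SS (x k) z /\ SS z `<=` SS (x k)) /\
     (forall y, SS z y -> phi y = phi z /\ phi z = J z) /\
     (forall y, SS z y -> SS y `<=` qclosure d [set y]))
  \/
  (* situation 2 *)
  (exists x : nat -> X,
     x 0%N = x0 /\
     (forall n, step_cond d phi (x n) (x n.+1)) /\
     (forall n, SS (x n.+1) `<=` SS (x n) /\ (phi (x n.+1) < phi (x n))%E) /\
     (exists alpha : R,
        (fun n => phi (x n)) @ \oo --> alpha%:E /\
        (fun n => J (x n)) @ \oo --> alpha%:E /\
        (forall n k, SS (x n) (x (n + k)%N)) /\
        right_K_Cauchy d x /\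
        (seq_right_K_complete d -> nearly_lsc d phi ->
         exists z : X, qconverges d x z /\
           (forall n, SS (x n) z /\ SS z `<=` SS (x n)) /\
           (forall y, SS z y ->
              phi y = phi z /\ phi z = J z /\ J z = alpha%:E) /\
           (forall y, SS z y -> SS y `<=` qclosure d [set y])))).
Proof.
move=> d_qpm phi_neqNy _ [c phi_ge] x0_fin; cbv zeta.
have [next next_step] := exists_next d_qpm phi_ge.
pose x n := iter n next x0.
have {}x0_fin : phi (x 0%N) \is a fin_num by [].
have x_next n : x n.+1 = next (x n) by [].
have x_steps := next_steps d_qpm phi_neqNy next_step x_next x0_fin.
have [fixed|no_fixed] := pselect (exists m, phi (x m) == Jval d phi (x m)).
  left; have [m /eqP xm_J m_min] := ex_minnP fixed.
  have steps : forall k, (k < m)%N -> step_cond d phi (x k) (x k.+1).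
    by apply: x_steps => k km; apply/negP => /m_min; rewrite leqNgt km.
  exists m, x; do 3 split=> //.
  exact: (terminal_chain_properties d_qpm phi_neqNy phi_ge x0_fin steps xm_J).
right; have steps n : step_cond d phi (x n) (x n.+1).
  by apply: (x_steps n.+1) => // k _; apply/negP => fixed_k; apply: no_fixed; exists k.
exists x; do 2 split=> //.
exact: (infinite_descent_properties d_qpm phi_neqNy phi_ge x0_fin steps).
Qed.
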